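(* Let $q=p_1p_2$ with $p_1\neq p_2$ odd primes. Consider the map $\mathcal S$ sending a pair of integers $(q_1,q_2)$ with $q_1,q_2,q_1+q_2,q_1-q_2$ all $\not\equiv 0\pmod q$ to the triple of polynomials $\mathcal S(q_1,q_2)=(\psi(q_1,q_2),\alpha(q_1,q_2),\beta(q_1,q_2))$. Then $\mathcal S$ takes at most $11$ distinct values.
   Context: Let $\gamma=e^{2\pi i/q}$. Let $A$ be the set of residues in $\{1,\dots,q-1\}$ coprime to $q$, $B=\{xp_1: x=1,\dots,p_2-1\}$ and $C=\{xp_2: x=1,\dots,p_1-1\}$. For a pair $(q_1,q_2)$ and a set $S\subset\{1,\dots,q-1\}$ put $\Pi_S(q_1,q_2)(z)=\sum_{l\in S}\prod_{i=1}^{2}(z-\gamma^{q_il})(z-\gamma^{-q_il})$; then $\psi=\Pi_A$, $\alpha=\Pi_B$, $\beta=\Pi_C$. *)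

From HB Require Import structures.
From mathcomp Require Import all_boot all_order all_algebra all_field.
Set Implicit Arguments. Unset Strict Implicit. Unset Printing Implicit Defensive.
Import Order.TTheory GRing.Theory Num.Theory.
Local Open Scope ring_scope.

Definition PiS (g : algC) (S : seq nat) (q1 q2 : int) : {poly algC} :=
  \sum_(l <- S)
    (('X - (g ^ (q1 * l%:Z))%:P) * ('X - (g ^ (- (q1 * l%:Z)))%:P) *
     (('X - (g ^ (q2 * l%:Z))%:P) * ('X - (g ^ (- (q2 * l%:Z)))%:P))).

Definition setA (q : nat) : seq nat := [seq l <- iota 1 q.-1 | coprime l q].
Definition setB (p1 p2 : nat) : seq nat := [seq (x * p1)%N | x <- iota 1 p2.-1].
Definition setC (p1 p2 : nat) : seq nat := [seq (x * p2)%N | x <- iota 1 p1.-1].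

Definition psi (g : algC) (p1 p2 : nat) := PiS g (setA (p1 * p2)).
Definition alpha (g : algC) (p1 p2 : nat) := PiS g (setB p1 p2).
Definition beta (g : algC) (p1 p2 : nat) := PiS g (setC p1 p2).

Definition Smap (g : algC) (p1 p2 : nat) (q1 q2 : int)
  : {poly algC} * {poly algC} * {poly algC} :=
  (psi g p1 p2 q1 q2, alpha g p1 p2 q1 q2, beta g p1 p2 q1 q2).

Definition admissible (q : nat) (q1 q2 : int) : bool :=
  [&& ~~ (q%:Z %| q1)%Z, ~~ (q%:Z %| q2)%Z,
      ~~ (q%:Z %| q1 + q2)%Z & ~~ (q%:Z %| q1 - q2)%Z].

(* Write q = p1 p2 and let g be a primitive q-th root of unity.
   1. Each factor (z - g^m)(z - g^-m) equals z^2 + 1 - (g^m + g^-m) z, so for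
      every index set S the polynomial Pi_S(q1,q2) is a fixed quartic
      ((z^2+1)^2 |S| - s (z^2+1) z + t z^2) whose coefficients s, t are the
      trace sums T(q1) + T(q2) and T(q1+q2) + T(q1-q2), where
      T(k) = sum_(l in S) (g^(kl) + g^(-kl)).
   2. For S = A, B, C these are Ramanujan-type sums: geometric sums over
      multiples of a divisor of q, combined by inclusion-exclusion for A.
      For q not dividing k they only depend on the "divisibility pattern"
      (p1 | k, p2 | k) of k.
   3. Hence S(q1,q2) only depends on the four patterns of q1, q2, q1+q2,
      q1-q2, and is unchanged by swapping q1,q2 or q1+q2,q1-q2.  Since p1, p2
      are odd, each p_i divides none, exactly one or all four of these
      numbers, and since q divides none of them no pattern is (true,true).
   4. A finite enumeration shows that, up to the two swaps, only 11 pattern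
      quadruples satisfy these constraints. *)

From Pilot Require Import Defs.
From HB Require Import structures.
From mathcomp Require Import all_boot all_order all_algebra all_field ring zify.
Import Order.TTheory GRing.Theory Num.Theory.
Local Open Scope ring_scope.
Set Implicit Arguments. Unset Strict Implicit. Unset Printing Implicit Defensive.

Lemma quadratic_factor (R : comNzRingType) (a b : R) : a * b = 1 ->
  ('X - a%:P) * ('X - b%:P) = 'X^2 + 1 - (a + b) *: 'X :> {poly R}.
Proof. by move=> ab; rewrite -mul_polyC -[1 in RHS]polyC1 -ab polyCD polyCM; ring. Qed.

Lemma product_of_quadratics (R : comNzRingType) (c1 c2 : R) (u : {poly R}) :
  (u - c1 *: 'X) * (u - c2 *: 'X) =
  u ^+ 2 - (c1 + c2) *: (u * 'X) + (c1 * c2) *: 'X^2.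
Proof. by rewrite -!mul_polyC polyCD polyCM; ring. Qed.

Lemma pair_sum_mul (g : algC) (m n : int) : g != 0 ->
  (g ^ m + g ^ (- m)) * (g ^ n + g ^ (- n)) =
  (g ^ (m + n) + g ^ (- (m + n))) + (g ^ (m - n) + g ^ (- (m - n))).
Proof. by move=> g_neq0; rewrite !expfzDr ?opprD ?opprK ?expfzDr //; ring. Qed.

Definition quartic (n : nat) (s t : algC) : {poly algC} :=
  ('X^2 + 1) ^+ 2 *+ n - s *: (('X^2 + 1) * 'X) + t *: 'X^2.

Definition csum (g : algC) (S : seq nat) (k : int) : algC :=
  \sum_(l <- S) g ^ (k * l%:Z).

Definition tsum (g : algC) (S : seq nat) (k : int) : algC := csum g S k + csum g S (- k).

Lemma PiS_quartic (g : algC) (S : seq nat) (q1 q2 : int) : g != 0 ->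
  PiS g S q1 q2 = quartic (size S) (tsum g S q1 + tsum g S q2)
                                   (tsum g S (q1 + q2) + tsum g S (q1 - q2)).
Proof.
move=> g_neq0; have inv m : g ^ m * g ^ (- m) = 1 by rewrite -expfzDr ?subrr.
rewrite /PiS /quartic /tsum /csum.
under eq_bigr => l _ do
  rewrite !quadratic_factor ?inv // product_of_quadratics pair_sum_mul // -!mulrDl
          -!mulrBl -!mulNr.
rewrite big_split sumrB -!scaler_suml /= big_const_seq count_predT iter_addr_0.
by rewrite !big_split.
Qed.

Lemma expz_eq1 (q : nat) (g : algC) (m : int) : q.-primitive_root g ->
  (g ^ m == 1) = (q%:Z %| m)%Z.
Proof.
move=> g_prim; rewrite -[RHS]/(q %| `|m|)%N; case: m => n /=.
  by rewrite (prim_order_dvd g_prim).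
by rewrite NegzE -invr_expz invr_eq1 (prim_order_dvd g_prim).
Qed.

Lemma sum_unity_powers (R : idomainType) (w : R) (e : nat) : w ^+ e = 1 ->
  \sum_(0 <= x < e) w ^+ x = if w == 1 then e%:R else 0.
Proof.
move=> we; have [->|w_neq1] := eqVneq w 1.
  by rewrite (eq_bigr (fun=> 1)) ?sumr_const_nat ?subn0 // => x _; rewrite expr1n.
apply/eqP; have := subrX1 w e; rewrite we subrr big_mkord => /esym/eqP.
by rewrite mulf_eq0 subr_eq0 (negbTE w_neq1).
Qed.

Lemma sum_over_multiples (V : nmodType) (F : nat -> V) (d e : nat) : (0 < d)%N ->
  \sum_(0 <= l < e * d | (d %| l)%N) F l = \sum_(0 <= x < e) F (x * d)%N.
Proof.
move=> d_gt0; rewrite big_mkcond big_nat_mul /=; apply: eq_bigr => x _.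
rewrite big_ltn ?ltn_pmul2r // dvdn_mull // big1_seq ?addr0 // => l.
rewrite mem_index_iota => /andP[_ /andP[lo hi]].
suff /negbTE-> : ~~ (d %| l)%N by [].
have -> : l = (l - x * d + x * d)%N by rewrite subnK // ltnW.
rewrite dvdn_addl ?dvdn_mull //; apply: contraL hi => /dvdn_leq.
rewrite subn_gt0 lo => /(_ isT); rewrite mulSn; lia.
Qed.

(* For q = d e, the powers g^(k x d), x < e, run over an e-th root of unity. *)
Lemma sum_multiple_powers (q d e : nat) (g : algC) (k : int) :
  q.-primitive_root g -> (d * e)%N = q -> (0 < d)%N ->
  \sum_(0 <= x < e) g ^ (k * (x * d)%N%:Z) = if (e%:Z %| k)%Z then e%:R else 0.
Proof.
move=> g_prim de d_gt0; set w := g ^ (k * d%:Z).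
have powE x : g ^ (k * (x * d)%N%:Z) = w ^+ x.
  by rewrite exprnP exprz_exp PoszM (mulrC x%:Z) mulrA.
have w_root : w ^+ e = 1.
  by rewrite -powE mulnC de mulrC -exprz_exp -exprnP (prim_expr_order g_prim) exp1rz.
have w_eq1 : (w == 1) = (e%:Z %| k)%Z.
  rewrite (expz_eq1 _ g_prim) -[LHS]/(q %| absz (k * d%:Z)%R)%N abszM -[RHS]/(e %| absz k)%N.
  by rewrite -de [(absz k * d)%N]mulnC dvdn_pmul2l.
by rewrite (eq_bigr _ (fun x _ => powE x)) sum_unity_powers // w_eq1.
Qed.

Lemma sum_divisible_exponents (q d e : nat) (g : algC) (k : int) :
  q.-primitive_root g -> (d * e)%N = q -> (0 < d)%N ->
  \sum_(0 <= l < q | (d %| l)%N) g ^ (k * l%:Z) = if (e%:Z %| k)%Z then e%:R else 0.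
Proof.
move=> g_prim de d_gt0.
by rewrite -{1}de mulnC sum_over_multiples // (sum_multiple_powers _ g_prim de).
Qed.

Lemma sum_coprime_incl_excl (V : zmodType) (F : nat -> V) (p1 p2 n : nat) :
  prime p1 -> prime p2 -> p1 != p2 ->
  \sum_(0 <= l < n | coprime l (p1 * p2)) F l =
  \sum_(0 <= l < n) F l - \sum_(0 <= l < n | (p1 %| l)%N) F l
  - \sum_(0 <= l < n | (p2 %| l)%N) F l + \sum_(0 <= l < n | (p1 * p2 %| l)%N) F l.
Proof.
move=> p1_pr p2_pr p1_neq_p2.
have p12_cop : coprime p1 p2 by rewrite prime_coprime // dvdn_prime2.
rewrite !(big_mkcond (fun l => (_ %| l)%N)) [LHS]big_mkcond -!sumrB -big_split /=.
apply: eq_bigr => l _ /=.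
rewrite coprimeMr (Gauss_dvd _ p12_cop) !(coprime_sym l) !prime_coprime //.
by case: (p1 %| l)%N; case: (p2 %| l)%N; rewrite /= ?subr0 ?addr0 ?subrr ?sub0r ?addNr.
Qed.

Lemma csum_multiples (q d e : nat) (g : algC) (k : int) :
  q.-primitive_root g -> (d * e)%N = q -> (0 < d)%N -> (0 < e)%N ->
  csum g [seq (x * d)%N | x <- iota 1 e.-1] k = (if (e%:Z %| k)%Z then e%:R else 0) - 1.
Proof.
move=> g_prim de d_gt0 e_gt0.
rewrite /csum big_map -(sum_multiple_powers _ g_prim de d_gt0) (big_ltn e_gt0).
by rewrite mul0n mulr0 expr0z [1 + _]addrC addrK /index_iota subn1.
Qed.

Lemma csum_coprime (p1 p2 : nat) (g : algC) (k : int) :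
  prime p1 -> prime p2 -> p1 != p2 -> (p1 * p2)%N.-primitive_root g ->
  csum g (setA (p1 * p2)) k =
  (if ((p1 * p2)%N%:Z %| k)%Z then (p1 * p2)%:R else 0)
  - (if (p2%:Z %| k)%Z then p2%:R else 0) - (if (p1%:Z %| k)%Z then p1%:R else 0) + 1.
Proof.
move=> p1_pr p2_pr p1_neq_p2 g_prim.
have q_gt1 : (1 < p1 * p2)%N by have := prime_gt1 p1_pr; have := prime_gt1 p2_pr; nia.
have p1_gt0 := prime_gt0 p1_pr; have p2_gt0 := prime_gt0 p2_pr.
rewrite /csum /setA big_filter -{1}[(p1 * p2).-1]subn1 -/(index_iota 1 (p1 * p2)).
have skip0 : \sum_(1 <= l < p1 * p2 | coprime l (p1 * p2)) g ^ (k * l%:Z) =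
               \sum_(0 <= l < p1 * p2 | coprime l (p1 * p2)) g ^ (k * l%:Z).
  by rewrite [RHS]big_ltn_cond ?(ltnW q_gt1) // /coprime gcd0n gtn_eqF.
rewrite skip0 sum_coprime_incl_excl //.
rewrite -(eq_bigl _ _ (fun l => dvd1n l)).
rewrite (sum_divisible_exponents _ g_prim (mul1n _)) //.
rewrite (sum_divisible_exponents _ g_prim (erefl _)) //.
rewrite (sum_divisible_exponents _ g_prim (mulnC p2 p1)) //.
by rewrite (sum_divisible_exponents _ g_prim (muln1 _)) ?(ltnW q_gt1) // dvd1z.
Qed.

Definition pattern (p1 p2 : nat) (k : int) : bool * bool :=
  ((p1%:Z %| k)%Z, (p2%:Z %| k)%Z).

Notation pattern4 := ((bool * bool) * (bool * bool) * (bool * bool) * (bool * bool))%type.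

Definition quad_pattern (p1 p2 : nat) (q1 q2 : int) : pattern4 :=
  (pattern p1 p2 q1, pattern p1 p2 q2, pattern p1 p2 (q1 + q2), pattern p1 p2 (q1 - q2)).

Definition pattern_poly (n : nat) (f : bool * bool -> algC) (t : pattern4) : {poly algC} :=
  let: (x1, x2, y1, y2) := t in quartic n ((f x1 + f x2) *+ 2) ((f y1 + f y2) *+ 2).

Lemma PiS_pattern (p1 p2 : nat) (g : algC) (S : seq nat) (f : bool * bool -> algC)
    (q1 q2 : int) : g != 0 ->
  (forall k, ~~ ((p1 * p2)%N%:Z %| k)%Z -> csum g S k = f (pattern p1 p2 k)) ->
  admissible (p1 * p2) q1 q2 ->
  PiS g S q1 q2 = pattern_poly (size S) f (quad_pattern p1 p2 q1 q2).
Proof.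
move=> g_neq0 csumE /and4P[n1 n2 n3 n4].
have tsumE k : ~~ ((p1 * p2)%N%:Z %| k)%Z -> tsum g S k = f (pattern p1 p2 k) *+ 2.
  by move=> nk; rewrite /tsum !csumE ?rpredN // /pattern !rpredN mulr2n.
by rewrite PiS_quartic // !tsumE // -!mulrnDl.
Qed.

Definition valA (p1 p2 : nat) (b : bool * bool) : algC :=
  1 - (if b.1 then p1%:R else 0) - (if b.2 then p2%:R else 0).
Definition valB (p2 : nat) (b : bool * bool) : algC := (if b.2 then p2%:R else 0) - 1.
Definition valC (p1 : nat) (b : bool * bool) : algC := (if b.1 then p1%:R else 0) - 1.

Definition pattern_triple (p1 p2 : nat) (t : pattern4) :=
  (pattern_poly (size (setA (p1 * p2))) (valA p1 p2) t,
   pattern_poly (size (setB p1 p2)) (valB p2) t,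
   pattern_poly (size (Defs.setC p1 p2)) (valC p1) t).

Lemma Smap_pattern (p1 p2 : nat) (g : algC) (q1 q2 : int) :
  prime p1 -> prime p2 -> p1 != p2 -> (p1 * p2)%N.-primitive_root g ->
  admissible (p1 * p2) q1 q2 ->
  Smap g p1 p2 q1 q2 = pattern_triple p1 p2 (quad_pattern p1 p2 q1 q2).
Proof.
move=> p1_pr p2_pr p1_neq_p2 g_prim adm.
have g_neq0 : g != 0.
  apply/eqP => g0; move: (prim_expr_order g_prim).
  by rewrite g0 expr0n gtn_eqF ?(prim_order_gt0 g_prim) // => /eqP; rewrite eq_sym oner_eq0.
have [p1_gt0 p2_gt0] := (prime_gt0 p1_pr, prime_gt0 p2_pr).
have csumA k : ~~ ((p1 * p2)%N%:Z %| k)%Z ->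
    csum g (setA (p1 * p2)) k = valA p1 p2 (pattern p1 p2 k).
  by move=> nk; rewrite csum_coprime // (negbTE nk) /valA /=; ring.
have csumB k : csum g (setB p1 p2) k = valB p2 (pattern p1 p2 k).
  exact: (csum_multiples _ g_prim (erefl _)).
have csumC k : csum g (Defs.setC p1 p2) k = valC p1 (pattern p1 p2 k).
  exact: (csum_multiples _ g_prim (mulnC p2 p1)).
rewrite /Smap /psi /alpha /beta (PiS_pattern g_neq0 csumA adm).
rewrite (PiS_pattern g_neq0 (fun k _ => csumB k) adm).
by rewrite (PiS_pattern g_neq0 (fun k _ => csumC k) adm).
Qed.

Definition none_one_or_all (a b s d : bool) : bool :=
  (a + b + s + d <= 1)%N || [&& a, b, s & d].

Lemma odd_divisor_none_one_or_all (p : nat) (q1 q2 : int) : odd p ->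
  none_one_or_all (p%:Z %| q1)%Z (p%:Z %| q2)%Z (p%:Z %| q1 + q2)%Z (p%:Z %| q1 - q2)%Z.
Proof.
move=> p_odd; rewrite /none_one_or_all.
have [a|na] := boolP (p%:Z %| q1)%Z.
  by rewrite (rpredDl _ a) (rpredBl _ a); case: (p%:Z %| q2)%Z.
have [b|nb] := boolP (p%:Z %| q2)%Z.
  by rewrite (rpredDr _ b) (rpredBr _ b) (negbTE na).
have half m : (p%:Z %| m *+ 2)%Z -> (p%:Z %| m)%Z.
  by rewrite -mulr_natr Gauss_dvdzl // coprimezE coprimen2.
suff : ~~ ((p%:Z %| q1 + q2)%Z && (p%:Z %| q1 - q2)%Z).
  by case: (p%:Z %| q1 + q2)%Z; case: (p%:Z %| q1 - q2)%Z.
apply: contra na => /andP[s d]; apply: half.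
have -> : q1 *+ 2 = (q1 + q2) + (q1 - q2) by rewrite mulr2n; ring.
exact: rpredD.
Qed.

Definition feasible (t : pattern4) : bool :=
  let: (x1, x2, y1, y2) := t in
  [&& ~~ (x1.1 && x1.2), ~~ (x2.1 && x2.2), ~~ (y1.1 && y1.2), ~~ (y2.1 && y2.2),
      none_one_or_all x1.1 x2.1 y1.1 y2.1 & none_one_or_all x1.2 x2.2 y1.2 y2.2].

Lemma quad_pattern_feasible (p1 p2 : nat) (q1 q2 : int) :
  prime p1 -> prime p2 -> p1 != p2 -> odd p1 -> odd p2 ->
  admissible (p1 * p2) q1 q2 -> feasible (quad_pattern p1 p2 q1 q2).
Proof.
move=> p1_pr p2_pr p1_neq_p2 p1_odd p2_odd /and4P[n1 n2 n3 n4].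
have p12_cop : coprime p1 p2 by rewrite prime_coprime // dvdn_prime2.
have not_both k :
    ~~ ((p1 * p2)%N%:Z %| k)%Z -> ~~ ((pattern p1 p2 k).1 && (pattern p1 p2 k).2).
  by rewrite /= -[_ \in _]/(p1 * p2 %| absz k)%N (Gauss_dvd _ p12_cop).
rewrite /= !not_both //=.
by apply/andP; split; apply: odd_divisor_none_one_or_all.
Qed.

Definition pair_code (b : bool * bool) : nat := (2 * b.1 + b.2)%N.

Definition sort_pair (x y : bool * bool) : (bool * bool) * (bool * bool) :=
  if (pair_code x <= pair_code y)%N then (x, y) else (y, x).

Definition normalize (t : pattern4) : pattern4 :=
  let: (x1, x2, y1, y2) := t in
  let: (a, b) := sort_pair x1 x2 in let: (c, d) := sort_pair y1 y2 in (a, b, c, d).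

Definition bit_pairs : seq (bool * bool) :=
  [:: (false, false); (false, true); (true, false); (true, true)].

Definition all_patterns : seq pattern4 :=
  [seq (xy, y2) | xy <- [seq (x, y1) | x <- [seq (x1, x2) | x1 <- bit_pairs,
                                                               x2 <- bit_pairs],
                                      y1 <- bit_pairs],
                  y2 <- bit_pairs].

Lemma all_patterns_complete (t : pattern4) : t \in all_patterns.
Proof.
have bits b : b \in bit_pairs by case: b => [[] []].
by case: t => [[[x1 x2] y1] y2]; rewrite !allpairs_f.
Qed.

Definition pattern_reps : seq pattern4 :=
  undup [seq normalize t | t <- all_patterns & feasible t].

Lemma size_pattern_reps : size pattern_reps = 11%N.
Proof. by vm_compute. Qed.

Lemma normalize_mem_reps (t : pattern4) : feasible t -> normalize t \in pattern_reps.
Proof.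
move=> t_feas; rewrite mem_undup; apply: map_f.
by rewrite mem_filter t_feas all_patterns_complete.
Qed.

Lemma pattern_poly_normalize (n : nat) (f : bool * bool -> algC) (t : pattern4) :
  pattern_poly n f (normalize t) = pattern_poly n f t.
Proof.
case: t => [[[x1 x2] y1] y2]; rewrite /normalize /sort_pair.
by case: ifP => _; case: ifP => _; rewrite /= ?[f x2 + _]addrC ?[f y2 + _]addrC.
Qed.

Theorem proposition3p1p3 (p1 p2 : nat) (g : algC) :
  prime p1 -> prime p2 -> p1 != p2 -> odd p1 -> odd p2 ->
  (p1 * p2)%N.-primitive_root g ->
  exists s : seq ({poly algC} * {poly algC} * {poly algC}),
    (size s <= 11)%N /\
    forall q1 q2 : int, admissible (p1 * p2) q1 q2 ->
      Smap g p1 p2 q1 q2 \in s.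
Proof.
move=> p1_pr p2_pr p1_neq_p2 p1_odd p2_odd g_prim.
exists [seq pattern_triple p1 p2 t | t <- pattern_reps].
split; first by rewrite size_map size_pattern_reps.
move=> q1 q2 adm; rewrite (Smap_pattern p1_pr p2_pr p1_neq_p2 g_prim adm).
set t := quad_pattern p1 p2 q1 q2.
have -> : pattern_triple p1 p2 t = pattern_triple p1 p2 (normalize t).
  by rewrite /pattern_triple !pattern_poly_normalize.
by apply/map_f/normalize_mem_reps/quad_pattern_feasible.
Qed.
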